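(* Consider the closed compartmental reaction-diffusion system on $\bar{\mathbb{R}}_+^{mN}$ $$\dot X=F^*(X):=-\big(( *_0)^{-1}\otimes I_m\big)\,\Delta_d(X)\,\frac{X}{X^*}+F(X),$$ with $\Delta_d(X)=(\mathbf{d}\otimes I_m)^{\mathrm{T}}( *_1\otimes I_m)R_d(X)(\mathbf{d}\otimes I_m)$, where all objects are as described in the context. Suppose $X:[0,t^*]\to\bar{\mathbb{R}}_+^{mN}$ is any solution of this system. Then for every $k=1,\dots,mN$: if $X_k(0)>0$ then $X_k(t^* )>0$.
   Context: Reaction network: $m$ species, $c$ complexes, $r$ reactions; $Z$ is the $m\times c$ complex stoichiometric matrix (nonnegative integer entries, column $\rho$ gives the species composition of complex $\rho$); $B$ is the $c\times r$ incidence matrix of the directed complex graph (each column has one $+1$ at the substrate complex and one $-1$ at the product complex of the reaction); $x^*\in\mathbb{R}_+^m$ (all entries strictly positive) is a thermodynamic equilibrium and $\mathcal{K}(x^* )=\mathrm{diag}(\kappa_1,\dots,\kappa_r)$ with all $\kappa_j>0$. The reaction vector field is $f(x)=-ZB\mathcal{K}(x^* )B^{\mathrm{T}}\mathrm{Exp}\big(Z^{\mathrm{T}}\mathrm{Ln}(x/x^* )\big)$, where $\mathrm{Ln}$, $\mathrm{Exp}$ act componentwise and $x/x^*$ is the componentwise quotient; since the entries of $\mathrm{Exp}(Z^{\mathrm{T}}\mathrm{Ln}(x/x^* ))$ are the monomials $\prod_i (x_i/x_i^* )^{Z_{i\rho}}$, $f$ extends to $\bar{\mathbb{R}}_+^m$.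 Spatial discretization: a simplicial triangulation $K$ of the spatial domain with $N$ vertices and $N_e$ edges; $\mathbf{d}$ is the $N_e\times N$ matrix that is the transpose of the (oriented) vertex-edge incidence matrix of the 1-skeleton of $K$; $*_0$ is an $N\times N$ positive diagonal matrix (volumes of the dual cells of the vertices) and $*_1$ an $N_e\times N_e$ positive diagonal matrix. $X=((x^1)^{\mathrm{T}},\dots,(x^N)^{\mathrm{T}})^{\mathrm{T}}$ with $x^j\in\bar{\mathbb{R}}_+^m$ the concentrations in compartment $j$, $X^*=((x^* )^{\mathrm{T}},\dots,(x^* )^{\mathrm{T}})^{\mathrm{T}}$, $X/X^*$ the componentwise quotient, $F(X)=(f(x^1)^{\mathrm{T}},\dots,f(x^N)^{\mathrm{T}})^{\mathrm{T}}$. $R_d(X)$ is an $mN_e\times mN_e$ diagonal matrix with $R_d(X)\ge\alpha I$ for some $\alpha>0$, depending continuously differentiably on $X$. $\otimes$ is the Kronecker product and $I_m$ the $m\times m$ identity. *)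

(* Kronecker product: mxtens (mathcomp-real-closed), index convention
   mxtens_index (i, j) = i * n + j, i.e. the standard Kronecker product. *)
From HB Require Import structures.
From mathcomp Require Import all_boot all_order all_algebra.
From mathcomp Require Import mxtens.
From mathcomp Require Import all_classical all_reals all_analysis.

Set Implicit Arguments.
Unset Strict Implicit.
Unset Printing Implicit Defensive.

Import Order.TTheory GRing.Theory Num.Theory.
Import numFieldNormedType.Exports.
Local Open Scope ring_scope.

Section Defs.
Variable R : realType.

Definition incidence_vec (n : nat) (v : 'I_n -> R) : Prop :=
  exists a b : 'I_n, a != b /\ v a = 1 /\ v b = -1 /\
    (forall k, k != a -> k != b -> v k = 0).

(* B : c x r incidence matrix of the complex graph: column j has +1 at the
   substrate complex and -1 at the product complex of reaction j. *)
Definition complex_incidence (c r : nat) (B : 'M[R]_(c, r)) : Prop :=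
  forall j : 'I_r, incidence_vec (fun i => B i j).

(* d : N_e x N, transpose of the oriented vertex-edge incidence matrix:
   row e has +1 and -1 at the two (distinct) endpoints of edge e. *)
Definition edge_vertex_incidence (Ne N : nat) (d : 'M[R]_(Ne, N)) : Prop :=
  forall e : 'I_Ne, incidence_vec (fun j => d e j).

(* Exp(Z^T Ln(x/x^* )): the vector of monomials prod_i (x_i/x^*_i)^{Z_{i rho}},
   which makes sense on the closed orthant. *)
Definition monomials (m c : nat) (Z : 'M[nat]_(m, c)) (xstar x : 'cV[R]_m)
  : 'cV[R]_c :=
  \col_(rho < c) \prod_(i < m) (x i 0 / xstar i 0) ^+ (Z i rho).

Definition reaction_field (m c r : nat) (Z : 'M[nat]_(m, c)) (B : 'M[R]_(c, r))
  (kappa : 'rV[R]_r) (xstar : 'cV[R]_m) (x : 'cV[R]_m) : 'cV[R]_m :=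
  - (map_mx (fun n : nat => n%:R) Z *m B *m diag_mx kappa *m B^T)
    *m monomials Z xstar x.

(* X = (x^1; ...; x^N) stacked: compartment j, species i sits at index
   mxtens_index (j, i) = j * m + i. *)
Definition compartment (N m : nat) (X : 'cV[R]_(N * m)) (j : 'I_N) : 'cV[R]_m :=
  \col_(i < m) X (mxtens_index (j, i)) 0.

Definition big_F (N m : nat) (f : 'cV[R]_m -> 'cV[R]_m) (X : 'cV[R]_(N * m))
  : 'cV[R]_(N * m) :=
  \col_(k < N * m)
    f (compartment X (mxtens_unindex k).1) (mxtens_unindex k).2 0.

Definition big_Xstar (N m : nat) (xstar : 'cV[R]_m) : 'cV[R]_(N * m) :=
  (const_mx 1 : 'cV[R]_N) *t xstar.

Definition cdiv (n : nat) (X Y : 'cV[R]_n) : 'cV[R]_n :=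
  \col_(k < n) (X k 0 / Y k 0).

(* Delta_d(X) = (d (x) I_m)^T ( *_1 (x) I_m) R_d(X) (d (x) I_m);
   star1 is the diagonal of *_1, RdX the diagonal of R_d(X). *)
Definition Delta_d (N Ne m : nat) (d : 'M[R]_(Ne, N)) (star1 : 'rV[R]_Ne)
  (RdX : 'rV[R]_(Ne * m)) : 'M[R]_(N * m) :=
  (d *t (1%:M : 'M[R]_m))^T *m (diag_mx star1 *t (1%:M : 'M[R]_m))
    *m diag_mx RdX *m (d *t (1%:M : 'M[R]_m)).

Definition Fstar (m c r N Ne : nat) (Z : 'M[nat]_(m, c)) (B : 'M[R]_(c, r))
  (kappa : 'rV[R]_r) (xstar : 'cV[R]_m) (d : 'M[R]_(Ne, N))
  (star0 : 'rV[R]_N) (star1 : 'rV[R]_Ne)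
  (Rd : 'cV[R]_(N * m) -> 'rV[R]_(Ne * m)) (X : 'cV[R]_(N * m))
  : 'cV[R]_(N * m) :=
  - (invmx (diag_mx star0) *t (1%:M : 'M[R]_m)) *m Delta_d d star1 (Rd X)
      *m cdiv X (big_Xstar N xstar)
  + big_F (reaction_field Z B kappa xstar) X.

End Defs.

From HB Require Import structures.
From mathcomp Require Import all_boot all_order all_algebra.
From mathcomp Require Import mxtens.
From mathcomp Require Import all_classical all_reals all_analysis.
From mathcomp Require Import ring lra.

Set Implicit Arguments.
Unset Strict Implicit.
Unset Printing Implicit Defensive.

Import Order.TTheory GRing.Theory Num.Theory.
Import numFieldNormedType.Exports.
Local Open Scope ring_scope.
Local Open Scope classical_set_scope.

(* For k = (j, i) every term of F^* that decreases X_k carries the factor X_k: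
   the diffusive outflow of species i from compartment j is at most
   (1 / *_0 j) (sum_e *_1 e R_d e) X_k / x*_i, and every reaction consuming
   species i has a monomial containing x_i / x*_i.  Hence
   F^*_k(X) >= - c_k(X) X_k with c_k continuous on the closed orthant (R_d is
   continuous because its directional derivatives are).  Bounding c_k(X(t)) by
   its maximum M on [0, tstar] makes t |-> X_k(t) e^(M t) nondecreasing, so
   X_k(tstar) >= X_k(0) e^(-M tstar) > 0. *)

Section MatrixSums.
Variable R : pzRingType.

Lemma sum_mxtens_index (m n : nat) (F : 'I_(m * n) -> R) :
  \sum_k F k = \sum_(a < m) \sum_(b < n) F (mxtens_index (a, b)).
Proof.
rewrite pair_big /= (reindex (@mxtens_index m n)) /=.
  by apply: eq_bigr => -[a b].
apply: onW_bij; exists (@mxtens_unindex m n).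
  exact: mxtens_indexK.
exact: mxtens_unindexK.
Qed.

Lemma mul_tensmx1 (p q m : nat) (A : 'M[R]_(p, q)) (v : 'cV[R]_(q * m)) a i :
  ((A *t (1%:M : 'M[R]_m)) *m v) (mxtens_index (a, i)) 0 =
  \sum_b A a b * v (mxtens_index (b, i)) 0.
Proof.
rewrite mxE sum_mxtens_index; apply: eq_bigr => b _.
rewrite (bigD1 i) //= big1 ?addr0; first by rewrite tensmxE mxE eqxx mulr1.
by move=> i' /negbTE i'i; rewrite tensmxE mxE eq_sym i'i mulr0 mul0r.
Qed.

Lemma sum_diag_mx (n : nat) (s : 'rV[R]_n) a (w : 'I_n -> R) :
  \sum_b diag_mx s a b * w b = s 0 a * w a.
Proof.
rewrite (bigD1 a) //= big1 ?addr0; first by rewrite mxE eqxx mulr1n.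
by move=> b /negbTE ba; rewrite mxE eq_sym ba mulr0n mul0r.
Qed.

Lemma sum_incidence (n : nat) (v w : 'I_n -> R) a b :
  a != b -> v a = 1 -> v b = -1 -> (forall k, k != a -> k != b -> v k = 0) ->
  \sum_k v k * w k = w a - w b.
Proof.
move=> ab va vb v0; rewrite (bigD1 a) //= (bigD1 b) 1?eq_sym //= big1 ?addr0.
  by rewrite va vb mul1r mulN1r.
by move=> k /andP[ka kb]; rewrite v0 ?mul0r.
Qed.

End MatrixSums.

Arguments sum_incidence {R n v} w {a b}.

Lemma invmx_diag_mx (F : fieldType) (n : nat) (s : 'rV[F]_n) :
  (forall j, s 0 j != 0) -> invmx (diag_mx s) = diag_mx (\row_j (s 0 j)^-1).
Proof.
move=> s_neq0.
have sV : diag_mx s *m diag_mx (\row_j (s 0 j)^-1) = 1%:M.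
  apply/matrixP => a b; rewrite mul_diag_mx !mxE.
  by case: (eqVneq a b) => [->|_]; rewrite ?mulr1n ?divff ?mulr0n ?mulr0.
have [s_unit _] := mulmx1_unit sV.
by rewrite -[RHS]mul1mx -(mulVmx s_unit) -mulmxA sV mulmx1.
Qed.

Section RealAnalysis.
Variable R : realType.

Lemma derivable_mx_coord (U : normedModType R) (p q : nat) (f : U -> 'M[R]_(p, q))
    x v a b :
  derivable f x v ->
  derivable (fun y => f y a b) x v /\ 'D_v (fun y => f y a b) x = 'D_v f x a b.
Proof.
move=> df.
pose quot h : 'M[R]_(p, q) := h^-1 *: ((f \o shift x) (h *: v) - f x).
have quotE : (fun h : R => h^-1 *: (((fun y => f y a b) \o shift x) (h *: v) - f x a b))
    = (fun M : 'M[R]_(p, q) => M a b) \o quot.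
  by apply/funext => h; rewrite /= !mxE.
have coord_cvg : ((fun M : 'M[R]_(p, q) => M a b) \o quot) @ 0^' --> 'D_v f x a b.
  by apply: continuous_cvg => //; exact: coord_continuous.
split; first by rewrite /derivable quotE; apply/cvg_ex; exists ('D_v f x a b).
by rewrite /derive quotE; exact: cvg_lim coord_cvg.
Qed.

Lemma mx_entry_norm_le (p q : nat) (M : 'M[R]_(p, q)) a b : `|M a b| <= `|M|.
Proof.
rewrite [leRHS]/Num.Def.normr /= mx_normrE.
exact: (le_bigmax _ (fun ij : 'I_p * 'I_q => `|M ij.1 ij.2|) (a, b)).
Qed.

Lemma mx_norm_le (p q : nat) (M : 'M[R]_(p, q)) C : 0 <= C ->
  (forall a b, `|M a b| <= C) -> `|M| <= C.
Proof.
move=> C_ge0 M_le; rewrite /Num.Def.normr /= mx_normrE.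
by apply: bigmax_le => // -[a b] _; exact: M_le.
Qed.

Lemma norm_sub_le_derive1_bound (phi : R -> R) a b C : a <= b ->
  (forall s, a <= s <= b -> derivable phi s 1) ->
  (forall s, a <= s <= b -> `|phi^`() s| <= C) ->
  `|phi b - phi a| <= C * (b - a).
Proof.
move=> ab dphi phi'_le.
have phi_cont : {within `[a, b], continuous phi}.
  by apply: derivable_within_continuous => s; rewrite in_itv /=; exact: dphi.
have phi_derive s : s \in `]a, b[%R -> is_derive s 1 phi (phi^`() s).
  rewrite in_itv /= => /andP[a_s s_b]; rewrite derive1E; apply: derivableP.
  by apply: dphi; rewrite !ltW.
have [s s_ab ->] := MVT_segment ab phi_derive phi_cont.
move: s_ab; rewrite in_itv /= => s_ab.
rewrite normrM (@ger0_norm _ (b - a)) ?subr_ge0 //.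
by apply: ler_wpM2r; [rewrite subr_ge0 | exact: phi'_le].
Qed.

Lemma norm_sub0_le_derive1_bound (phi : R -> R) h C :
  (forall s, `|s| <= `|h| -> derivable phi s 1 /\ `|phi^`() s| <= C) ->
  `|phi h - phi 0| <= C * `|h|.
Proof.
move=> phi_bound.
have dphi s : `|s| <= `|h| -> derivable phi s 1 by case/phi_bound.
have phi'_le s : `|s| <= `|h| -> `|phi^`() s| <= C by case/phi_bound.
have [h_ge0|h_lt0] := leP 0 h.
  have := @norm_sub_le_derive1_bound phi 0 h C h_ge0.
  rewrite subr0 (ger0_norm h_ge0); apply=> s /andP[s_ge0 sh];
    [apply: dphi | apply: phi'_le]; by rewrite !ger0_norm.
have := @norm_sub_le_derive1_bound phi h 0 C (ltW h_lt0).
rewrite distrC sub0r (ltr0_norm h_lt0); apply=> s /andP[hs s_le0];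
  [apply: dphi | apply: phi'_le];
  by rewrite (ler0_norm s_le0) (ltr0_norm h_lt0) lerN2.
Qed.

Lemma near_lipschitz_continuous (U V : normedModType R) (g : U -> V) Y C r :
  0 < r -> (forall Z, `|Z - Y| < r -> `|g Z - g Y| <= C * `|Z - Y|) ->
  {for Y, continuous g}.
Proof.
move=> r_gt0 g_lip; apply/cvgrPdist_lt => eps eps_gt0.
have C1_gt0 : 0 < `|C| + 1 by rewrite ltr_wpDl.
have rmin_gt0 : 0 < Num.min r (eps / (`|C| + 1)) by rewrite lt_min r_gt0 divr_gt0.
apply: filterS (nbhsx_ballx Y _ rmin_gt0) => Z.
rewrite -ball_normE /ball_ /= lt_min distrC => /andP[Zr Zeps].
rewrite distrC; apply: le_lt_trans (g_lip Z Zr) _.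
move: Zeps; set w := eps / (`|C| + 1) => Zeps.
have w_gt0 : 0 < w by rewrite divr_gt0.
have wE : w * (`|C| + 1) = eps by rewrite divfK ?gt_eqF.
have := ler_norm C; have := normr_ge0 C; have := normr_ge0 (Z - Y); nra.
Qed.

Lemma derive1_along_line (n : nat) (g : 'cV[R]_n -> R) (P e : 'cV[R]_n) s :
  derivable g (s *: e + P) e ->
  derivable (fun t : R => g (t *: e + P)) s 1 /\
  (fun t : R => g (t *: e + P))^`() s = 'D_e g (s *: e + P).
Proof.
have quotE :
    (fun h : R => h^-1 *: (((fun t : R => g (t *: e + P)) \o shift s) (h *: 1)
      - g (s *: e + P))) =
    (fun h : R => h^-1 *: ((g \o shift (s *: e + P)) (h *: e) - g (s *: e + P))).
  by apply/funext => h; rewrite /= [_%:A]mulr1 scalerDl addrA.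
move=> dg; split; first by rewrite /derivable quotE.
by rewrite derive1E /derive quotE.
Qed.

Section CoordinatePath.
Variables (n : nat) (Y h : 'cV[R]_n).

Definition coord_path (k : nat) : 'cV[R]_n :=
  Y + \col_l (if (l < k)%N then h l 0 else 0).

Lemma coord_path0 : coord_path 0 = Y.
Proof.
rewrite /coord_path (_ : \col_l _ = 0) ?addr0 //.
by apply/matrixP => a b; rewrite !mxE.
Qed.

Lemma coord_path_end : coord_path n = Y + h.
Proof.
by congr (_ + _); apply/matrixP => a b; rewrite !mxE ltn_ord ord1.
Qed.

Lemma coord_pathS (l : 'I_n) :
  coord_path l.+1 = h l 0 *: delta_mx l 0 + coord_path l.
Proof.
apply/matrixP => a b; rewrite !mxE ord1 ltnS leq_eqVlt eqxx andbT.
case: (eqVneq a l) => [->|al]; first by rewrite eqxx ltnn /= mulr1 addr0 addrC.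
have al_nat : (a == l :> nat) = false by exact: negbTE al.
by rewrite al_nat /= mulr0 add0r.
Qed.

Lemma coord_path_segment_norm (l : 'I_n) s :
  `|s| <= `|h l 0| -> `|s *: delta_mx l 0 + coord_path l - Y| <= `|h|.
Proof.
move=> s_le; rewrite /coord_path addrCA addrAC subrr add0r.
apply: mx_norm_le => // a b; rewrite !mxE ord1 eqxx andbT.
case: (eqVneq a l) => [->|al].
  by rewrite ltnn mulr1 addr0 (le_trans s_le) ?mx_entry_norm_le.
rewrite mulr0 add0r; case: ifP => _; last by rewrite normr0.
exact: mx_entry_norm_le.
Qed.

End CoordinatePath.

Lemma norm_sub_le_partials_bound (n : nat) (g : 'cV[R]_n -> R) (b : 'I_n -> R)
    (Y Z : 'cV[R]_n) :
  (forall W l, derivable g W (delta_mx l 0)) ->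
  (forall W l, `|W - Y| <= `|Z - Y| -> `|'D_(delta_mx l 0) g W| <= b l) ->
  `|g Z - g Y| <= (\sum_l b l) * `|Z - Y|.
Proof.
move=> g_der g'_le; set h := Z - Y.
have -> : g Z - g Y = g (coord_path Y h n) - g (coord_path Y h 0).
  by rewrite coord_path_end coord_path0 /h (addrC Y) subrK.
rewrite -(telescope_sumr (fun k => g (coord_path Y h k)) (leq0n n)) big_mkord.
apply: le_trans (ler_norm_sum _ _ _) _; rewrite mulr_suml; apply: ler_sum => l _.
rewrite coord_pathS -[in g (coord_path Y h l)](add0r (coord_path Y h l)).
rewrite -(scale0r (delta_mx l 0)).
have b_ge0 : 0 <= b l by apply: le_trans (g'_le Y l _); rewrite ?subrr ?normr0.
have segment_lip : `|g (h l 0 *: delta_mx l 0 + coord_path Y h l) -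
    g (0 *: delta_mx l 0 + coord_path Y h l)| <= b l * `|h l 0|.
  have := @norm_sub0_le_derive1_bound
    (fun t => g (t *: delta_mx l 0 + coord_path Y h l)) (h l 0) (b l).
  apply=> s s_le.
  have [s_der phi'E] :=
    derive1_along_line (g_der (s *: delta_mx l 0 + coord_path Y h l) l).
  by split=> //; rewrite phi'E; apply: g'_le; exact: (coord_path_segment_norm Y s_le).
apply: (le_trans segment_lip); apply: ler_wpM2l => //.
exact: (@mx_entry_norm_le _ _ h l 0).
Qed.

Lemma continuous_of_partials (n : nat) (g : 'cV[R]_n -> R) :
  (forall W l, derivable g W (delta_mx l 0)) ->
  (forall l, continuous (fun W => 'D_(delta_mx l 0) g W)) -> continuous g.
Proof.
move=> g_der g'_cont Y; pose b l := `|'D_(delta_mx l 0) g Y| + 1.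
pose close l W := `|'D_(delta_mx l 0) g Y - 'D_(delta_mx l 0) g W| < 1.
have : \forall W \near Y, forall l, close l W.
  apply: (@filter_forall _ _ close _ (nbhs_filter Y)) => l.
  exact: (cvgr_dist_lt _ _ (g'_cont l Y) 1 ltr01).
move=> /nbhs_normP[r /= r_gt0 g'_near].
apply: (@near_lipschitz_continuous _ _ g Y (\sum_l b l) r r_gt0) => Z Zr.
apply: norm_sub_le_partials_bound => // W l WZ.
have WY : `|Y - W| < r by rewrite distrC; apply: le_lt_trans WZ Zr.
rewrite /b -[X in `|X|](subrK ('D_(delta_mx l 0) g Y)) addrC.
apply: le_trans (ler_normD _ _) _; rewrite lerD2l distrC ltW //.
exact: (g'_near _ WY l).
Qed.

Lemma continuous_mx_coord_of_derive (n p q : nat) (f : 'cV[R]_n -> 'M[R]_(p, q)) :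
  (forall Y v, derivable f Y v) -> (forall v, continuous (fun Y => 'D_v f Y)) ->
  forall a b, continuous (fun Y => f Y a b).
Proof.
move=> f_der f'_cont a b; apply: continuous_of_partials => [W l|l].
  exact: (derivable_mx_coord a b (f_der W _)).1.
have -> : (fun W => 'D_(delta_mx l 0) (fun Y => f Y a b) W) =
          (fun W => 'D_(delta_mx l 0) f W a b).
  by apply/funext => W; exact: (derivable_mx_coord a b (f_der W _)).2.
move=> W; exact: (@continuous_comp _ _ _ ('D_(delta_mx l 0) f)
  (fun M : 'M[R]_(p, q) => M a b) W (f'_cont _ W) (@coord_continuous R p q a b _)).
Qed.

Lemma gronwall_lower_bound (f : R -> R) (M a b : R) : a <= b ->
  {within `[a, b], continuous f} ->
  (forall t, a < t < b -> derivable f t 1 /\ - (M * f t) <= f^`() t) ->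
  f a * expR (M * a) <= f b * expR (M * b).
Proof.
move=> ab f_cont f'_ge.
pose E s := expR (M * s).
pose fE : R -> R := f * E.
have E_derive (s : R) : is_derive s 1 E (expR (M * s) * (M *: 1)).
  have scale_derive : is_derive s 1 (M \*: id) (M *: (1 : R)).
    by apply: is_deriveZ; exact: is_derive_id.
  exact: (is_derive1_comp (is_derive_expR _) scale_derive).
have fE_derive (t : R) : a < t < b ->
    is_derive t 1 fE (f t *: (expR (M * t) * (M *: 1)) + E t *: (f^`() t)%classic).
  case/f'_ge => f_der _; apply: is_deriveM (E_derive t).
  by rewrite derive1E; apply: derivableP.
have E_cont : continuous E.
  move=> s; apply/differentiable_continuous/derivable1_diffP.
  exact: (@ex_derive _ _ _ _ _ _ _ (E_derive s)).
have fE_cont : {within `[a, b], continuous fE}.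
  move=> t; apply: continuousM; [exact: f_cont | exact: continuous_subspaceT].
have fE_der (t : R) : t \in `]a, b[%R -> derivable fE t 1.
  by rewrite in_itv /= => t_ab; exact: (@ex_derive _ _ _ _ _ _ _ (fE_derive t t_ab)).
have fE'_ge0 (t : R) : t \in `]a, b[%R -> 0 <= fE^`() t.
  rewrite in_itv /= => t_ab.
  rewrite derive1E (@derive_val _ _ _ _ _ _ _ (fE_derive t t_ab)).
  have [_ f'_lb] := f'_ge t t_ab.
  have E_gt0 : 0 < E t by exact: expR_gt0.
  change (0 <= f t * (E t * (M * 1)) + E t * (f^`() t)%classic).
  move: f'_lb E_gt0; move: (f t) (E t) (f^`() t)%classic => ft Et f't; nra.
exact: (ger0_derive1_ndecr fE_der fE'_ge0 fE_cont (lexx a) ab (lexx b)).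
Qed.

End RealAnalysis.

Section ReactionDiffusionBounds.
Variable R : realType.

Lemma incidence_mul_dot_le (n : nat) (v q : 'I_n -> R) j :
  incidence_vec v -> (forall k, 0 <= q k) -> v j * \sum_k v k * q k <= q j.
Proof.
move=> [a [b [ab [va [vb v0]]]]] q_ge0; rewrite (sum_incidence q ab va vb v0).
case: (eqVneq j a) => [->|ja]; first by rewrite va mul1r gerDl oppr_le0.
case: (eqVneq j b) => [->|jb]; first by rewrite vb mulN1r opprB gerBl.
by rewrite v0 // mul0r.
Qed.

Lemma incidence_dot_mul_le (n : nat) (v z w : 'I_n -> R) :
  incidence_vec v -> (forall k, 0 <= z k) -> (forall k, 0 <= w k) ->
  (\sum_k v k * z k) * (\sum_k v k * w k) <= \sum_k z k * w k.
Proof.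
move=> [a [b [ab [va [vb v0]]]]] z_ge0 w_ge0.
rewrite !(sum_incidence _ ab va vb v0).
apply: (@le_trans _ _ (z a * w a + z b * w b)).
  have := z_ge0 a; have := z_ge0 b; have := w_ge0 a; have := w_ge0 b; nra.
rewrite (bigD1 a) //= (bigD1 b) 1?eq_sym //= addrA lerDl.
by apply: sumr_ge0 => k _; apply: mulr_ge0.
Qed.

Lemma reaction_fieldE (m c r : nat) (Z : 'M[nat]_(m, c)) (B : 'M[R]_(c, r))
    (kappa : 'rV[R]_r) (xstar x : 'cV[R]_m) i :
  reaction_field Z B kappa xstar x i 0 =
  - \sum_j kappa 0 j * ((\sum_s B s j * (Z i s)%:R) *
                        (\sum_s B s j * monomials Z xstar x s 0)).
Proof.
rewrite /reaction_field mulNmx mxE -!mulmxA mxE; congr (- _).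
under eq_bigr => s _ do rewrite mul_diag_mx !mxE big_distrr /=.
rewrite exchange_big /=; apply: eq_bigr => j _.
have trE : (B^T *m monomials Z xstar x) j 0 = \sum_s B s j * monomials Z xstar x s 0.
  by rewrite mxE; apply: eq_bigr => s _; rewrite mxE.
rewrite mulrCA mulr_suml; apply: eq_bigr => s _.
by rewrite mxE trE; ring.
Qed.

Lemma reaction_field_ge (m c r : nat) (Z : 'M[nat]_(m, c)) (B : 'M[R]_(c, r))
    (kappa : 'rV[R]_r) (xstar x : 'cV[R]_m) i :
  complex_incidence B -> (forall j, 0 < kappa 0 j) ->
  (forall s, 0 <= monomials Z xstar x s 0) ->
  - \sum_j kappa 0 j * \sum_s (Z i s)%:R * monomials Z xstar x s 0
  <= reaction_field Z B kappa xstar x i 0.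
Proof.
move=> B_inc kappa_gt0 mono_ge0; rewrite reaction_fieldE lerN2.
apply: ler_sum => j _; apply: ler_wpM2l; first exact: ltW.
by apply: (@incidence_dot_mul_le _ (fun s => B s j)).
Qed.

Lemma diffusion_le (N Ne : nat) (d : 'M[R]_(Ne, N)) (w : 'I_Ne -> R)
    (q : 'I_N -> R) j :
  edge_vertex_incidence d -> (forall e, 0 <= w e) -> (forall k, 0 <= q k) ->
  \sum_e d e j * (w e * \sum_k d e k * q k) <= (\sum_e w e) * q j.
Proof.
move=> d_inc w_ge0 q_ge0; rewrite mulr_suml; apply: ler_sum => e _.
by rewrite mulrCA; apply: ler_wpM2l => //; apply: incidence_mul_dot_le.
Qed.

Lemma monomials_ge0 (m c : nat) (Z : 'M[nat]_(m, c)) (xstar x : 'cV[R]_m) rho :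
  (forall l, 0 < xstar l 0) -> (forall l, 0 <= x l 0) ->
  0 <= monomials Z xstar x rho 0.
Proof.
move=> xstar_gt0 x_ge0; rewrite mxE; apply: prodr_ge0 => l _.
by apply/exprn_ge0/divr_ge0 => //; apply: ltW.
Qed.

(* When [Z i rho = 0] the truncated subtraction changes nothing, but the
   lowered monomial is then only ever used multiplied by [Z i rho]. *)
Definition lowered_monomial (m c : nat) (Z : 'M[nat]_(m, c)) (xstar x : 'cV[R]_m)
    (i : 'I_m) (rho : 'I_c) : R :=
  \prod_l (x l 0 / xstar l 0) ^+ (Z l rho - (l == i))%N.

Lemma mul_monomials (m c : nat) (Z : 'M[nat]_(m, c)) (xstar x : 'cV[R]_m) i rho :
  (Z i rho)%:R * monomials Z xstar x rho 0 =
  x i 0 / xstar i 0 * ((Z i rho)%:R * lowered_monomial Z xstar x i rho).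
Proof.
rewrite /monomials /lowered_monomial mxE.
case Zir: (Z i rho) => [|n]; first by rewrite !mul0r mulr0.
rewrite (bigD1 i) //= [in RHS](bigD1 i) //= Zir eqxx subn1 /= exprS.
under [in RHS]eq_bigr => l /negbTE li do rewrite li subn0.
by ring.
Qed.

End ReactionDiffusionBounds.

Section CompartmentalField.
Variables (R : realType) (m c r N Ne : nat).
Variables (Z : 'M[nat]_(m, c)) (B : 'M[R]_(c, r)) (kappa : 'rV[R]_r).
Variables (xstar : 'cV[R]_m) (d : 'M[R]_(Ne, N)).
Variables (star0 : 'rV[R]_N) (star1 : 'rV[R]_Ne).
Variable Rd : 'cV[R]_(N * m) -> 'rV[R]_(Ne * m).

Local Notation Fstar := (Fstar Z B kappa xstar d star0 star1 Rd).

Lemma FstarE (Y : 'cV[R]_(N * m)) j i :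
  (forall j, star0 0 j != 0) ->
  Fstar Y (mxtens_index (j, i)) 0 =
  - ((star0 0 j)^-1 * \sum_e d e j * (star1 0 e * (Rd Y 0 (mxtens_index (e, i)) *
      \sum_k d e k * (Y (mxtens_index (k, i)) 0 / xstar i 0))))
  + reaction_field Z B kappa xstar (compartment Y j) i 0.
Proof.
move=> star0_neq0; rewrite /Fstar /Delta_d mxE; congr (_ + _); last first.
  by rewrite /big_F mxE mxtens_indexK.
rewrite -!mulmxA mulNmx mxE; congr (- _).
rewrite invmx_diag_mx // mul_tensmx1 sum_diag_mx mxE; congr (_ * _).
rewrite trmx_tens trmx1 mul_tensmx1; apply: eq_bigr => e _; rewrite mxE.
congr (_ * _); rewrite mul_tensmx1 sum_diag_mx mul_diag_mx mxE.
congr (_ * (_ * _)); rewrite mul_tensmx1; apply: eq_bigr => k _.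
rewrite /cdiv /big_Xstar !mxE mxtens_indexK /= mul1r.
by congr (_ * (_ / xstar i _)); apply: val_inj.
Qed.

Definition loss_rate (j : 'I_N) (i : 'I_m) (Y : 'cV[R]_(N * m)) : R :=
  ((star0 0 j)^-1 * \sum_e star1 0 e * Rd Y 0 (mxtens_index (e, i))
   + \sum_s kappa 0 s * \sum_rho (Z i rho)%:R *
       lowered_monomial Z xstar (compartment Y j) i rho) / xstar i 0.

Hypothesis B_inc : complex_incidence B.
Hypothesis xstar_gt0 : forall i, 0 < xstar i 0.
Hypothesis kappa_gt0 : forall s, 0 < kappa 0 s.
Hypothesis d_inc : edge_vertex_incidence d.
Hypothesis star0_gt0 : forall j, 0 < star0 0 j.
Hypothesis star1_gt0 : forall e, 0 < star1 0 e.

Lemma Fstar_ge_loss (Y : 'cV[R]_(N * m)) j i :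
  (forall k, 0 <= Y k 0) -> (forall k, 0 <= Rd Y 0 k) ->
  - (loss_rate j i Y * Y (mxtens_index (j, i)) 0) <= Fstar Y (mxtens_index (j, i)) 0.
Proof.
move=> Y_ge0 Rd_ge0; rewrite FstarE; last by move=> j'; rewrite gt_eqF.
set y := Y (mxtens_index (j, i)) 0.
pose W := \sum_e star1 0 e * Rd Y 0 (mxtens_index (e, i)).
pose L := \sum_s kappa 0 s * \sum_rho (Z i rho)%:R *
  lowered_monomial Z xstar (compartment Y j) i rho.
have diffusion : (star0 0 j)^-1 * \sum_e d e j * (star1 0 e *
      (Rd Y 0 (mxtens_index (e, i)) *
       \sum_k d e k * (Y (mxtens_index (k, i)) 0 / xstar i 0)))
    <= (star0 0 j)^-1 * (W * (y / xstar i 0)).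
  apply: ler_wpM2l; first by rewrite invr_ge0 ltW.
  under eq_bigr => e _ do rewrite (mulrA (star1 0 e)).
  apply: (diffusion_le (q := fun k => Y (mxtens_index (k, i)) 0 / xstar i 0)) => //.
  - by move=> e; apply: mulr_ge0 => //; apply: ltW.
  - by move=> k; apply: divr_ge0 => //; apply: ltW.
have reaction :
    - (L * (y / xstar i 0)) <= reaction_field Z B kappa xstar (compartment Y j) i 0.
  apply: le_trans (reaction_field_ge _ _ _ _) => //; last first.
    by move=> rho; apply: monomials_ge0 => // l; rewrite mxE.
  rewrite lerN2 mulr_suml le_eqVlt; apply/orP; left.
  apply/eqP/eq_bigr => s _; rewrite -mulrA mulr_suml.
  congr (_ * _); apply: eq_bigr => rho _.
  by rewrite mul_monomials mulrC [compartment _ _ _ _]mxE.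
have -> : loss_rate j i Y * y =
    (star0 0 j)^-1 * (W * (y / xstar i 0)) + L * (y / xstar i 0).
  by rewrite /loss_rate /W /L; ring.
by rewrite opprD; apply: lerD; rewrite ?lerN2.
Qed.

Lemma solution_coord_derive1_ge (X : R -> 'cV[R]_(N * m)) t j i M :
  derivable X t 1 -> X^`() t = Fstar (X t) ->
  (forall k, 0 <= X t k 0) -> (forall k, 0 <= Rd (X t) 0 k) ->
  loss_rate j i (X t) <= M ->
  derivable (fun s => X s (mxtens_index (j, i)) 0) t 1 /\
  - (M * X t (mxtens_index (j, i)) 0) <= (fun s => X s (mxtens_index (j, i)) 0)^`() t.
Proof.
move=> X_der X'E Xt_ge0 Rdt_ge0 rate_le.
have [Xk_der Xk'E] := derivable_mx_coord (mxtens_index (j, i)) 0 X_der.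
split=> //; rewrite derive1E Xk'E -derive1E X'E.
apply: le_trans (Fstar_ge_loss j i Xt_ge0 Rdt_ge0).
by rewrite lerN2; apply: ler_wpM2r.
Qed.

Lemma loss_rate_continuous j i :
  (forall q, continuous (fun Y => Rd Y 0 q)) -> continuous (loss_rate j i).
Proof.
move=> Rd_cont Y.
have compartment_cont l : continuous (fun Y : 'cV[R]_(N * m) => compartment Y j l 0).
  have -> : (fun Y : 'cV[R]_(N * m) => compartment Y j l 0) =
            (fun Y => Y (mxtens_index (j, l)) 0) by apply/funext => W; rewrite mxE.
  exact: coord_continuous.
apply: (@continuousM _ _ (fun Y => _) (fun Y => _)); last exact: cst_continuous.
apply: (@continuousD _ _ _ (fun Y => _) (fun Y => _)).
  apply: (@continuousM _ _ (fun Y => _) (fun Y => _)); first exact: cst_continuous.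
  apply: (continuous_big add_continuous) => e _ W.
  apply: (@continuousM _ _ (fun Y => _) (fun Y => _)); first exact: cst_continuous.
  exact: Rd_cont.
apply: (continuous_big add_continuous) => s _ W.
apply: (@continuousM _ _ (fun Y => _) (fun Y => _)); first exact: cst_continuous.
apply: (continuous_big add_continuous) => rho _ {}W.
apply: (@continuousM _ _ (fun Y => _) (fun Y => _)); first exact: cst_continuous.
apply: (continuous_big mul_continuous) => l _ {}W.
have quot_cont : {for W, continuous (fun Y => compartment Y j l 0 / xstar l 0)}.
  apply: (@continuousM _ _ (fun Y => _) (fun Y => _)); last exact: cst_continuous.
  exact: compartment_cont.
exact: (continuous_comp quot_cont (@exprn_continuous R _ _)).
Qed.

End CompartmentalField.

Theorem lemma5 (R : realType) (m c r N Ne : nat)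
  (Z : 'M[nat]_(m, c)) (B : 'M[R]_(c, r)) (kappa : 'rV[R]_r)
  (xstar : 'cV[R]_m) (d : 'M[R]_(Ne, N))
  (star0 : 'rV[R]_N) (star1 : 'rV[R]_Ne)
  (Rd : 'cV[R]_(N * m) -> 'rV[R]_(Ne * m)) (alpha : R)
  (X : R -> 'cV[R]_(N * m)) (tstar : R) :
  complex_incidence B ->
  (forall i, 0 < xstar i 0) ->
  (forall j, 0 < kappa 0 j) ->
  edge_vertex_incidence d ->
  (forall j, 0 < star0 0 j) ->
  (forall e, 0 < star1 0 e) ->
  0 < alpha ->
  (forall Y : 'cV[R]_(N * m), (forall k, 0 <= Y k 0) ->
     forall k, alpha <= Rd Y 0 k) ->
  (forall (Y v : 'cV[R]_(N * m)), derivable Rd Y v) ->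
  (forall v : 'cV[R]_(N * m), continuous (fun Y => 'D_v Rd Y)) ->
  0 <= tstar ->
  (forall t, 0 <= t <= tstar -> forall k, 0 <= X t k 0) ->
  {within `[0, tstar], continuous X} ->
  (forall t, 0 < t < tstar ->
     derivable X t 1 /\
     X^`() t = Fstar Z B kappa xstar d star0 star1 Rd (X t)) ->
  forall k : 'I_(N * m), 0 < X 0 k 0 -> 0 < X tstar k 0.
Proof.
move=> B_inc xstar_gt0 kappa_gt0 d_inc star0_gt0 star1_gt0 alpha_gt0 Rd_ge_alpha
  Rd_der Rd'_cont tstar_ge0 X_ge0 X_cont X_ode k.
case: k / (mxtens_indexP k) => j i Xk0_gt0.
pose rate := loss_rate Z kappa xstar star0 star1 Rd j i.
have Rd_cont q : continuous (fun Y => Rd Y 0 q).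
  exact: continuous_mx_coord_of_derive.
have rate_cont : continuous rate := loss_rate_continuous Rd_cont.
have [t1 _ rate_le] :=
  EVT_max tstar_ge0 (fun t => continuous_comp (X_cont t) (rate_cont (X t))).
pose Xk t := X t (mxtens_index (j, i)) 0.
have Xk_cont : {within `[0, tstar], continuous Xk}.
  move=> t; exact: (continuous_comp (X_cont t)
    (@coord_continuous R (N * m) 1 (mxtens_index (j, i)) 0 (X t))).
have Xk'_ge t : 0 < t < tstar ->
    derivable Xk t 1 /\ - (rate (X t1) * Xk t) <= Xk^`() t.
  move=> t_in; have [X_der X'E] := X_ode t t_in.
  have Xt_ge0 : forall k, 0 <= X t k 0.
    by apply: X_ge0; case/andP: t_in => t_gt0 t_lt; rewrite !ltW.
  apply: (solution_coord_derive1_ge B_inc xstar_gt0 kappa_gt0 d_inc star0_gt0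
    star1_gt0 X_der X'E Xt_ge0) => [q|].
    exact: le_trans (ltW alpha_gt0) (Rd_ge_alpha _ Xt_ge0 q).
  by apply: rate_le; case/andP: t_in => t_gt0 t_lt; rewrite in_itv /= !ltW.
have growth := gronwall_lower_bound tstar_ge0 Xk_cont Xk'_ge.
(* A bare [rewrite mulr0] in [growth] tries to unfold [expR] and diverges. *)
have expR0_rate : expR (rate (X t1) * 0) = 1 by rewrite mulr0 expR0.
rewrite expR0_rate mulr1 in growth.
have := lt_le_trans Xk0_gt0 growth.
by rewrite pmulr_lgt0 // expR_gt0.
Qed.
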